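(* Let $L\subseteq\mathbb{Z}^{(\mathbb{N})}$ be a $\mathrm{Sym}$-invariant lattice, and suppose $\mathcal{H}$ is a finite equivariant Hilbert basis of the monoid $M=L\cap\mathbb{Z}_{\ge0}^{(\mathbb{N})}$. Let $g_L=\gcd(u_i\mid\mathbf{u}=(u_i)_{i\in\mathbb{N}}\in L,\ i\in\mathbb{N})$ and $\mathbf{g}_L=g_L(\mathbf{e}_1-\mathbf{e}_2)$. Then $L$ has a finite equivariant Graver basis $\mathcal{G}$ with $\pm\mathcal{H}\subseteq\mathcal{G}\subseteq\pm\mathcal{H}\cup\{\pm\mathbf{g}_L\}$.
   Context: $\mathbb{N}=\{1,2,\dots\}$. $\mathbb{Z}^{(\mathbb{N})}$ is the group of finitely supported integer sequences with standard basis $\mathbf{e}_i$, $\mathbb{Z}_{\ge0}^{(\mathbb{N})}$ its nonnegative elements; a lattice is a subgroup. $\mathrm{Sym}$ is the group of permutations of $\mathbb{N}$ fixing all but finitely many points, acting by $\sigma(\mathbf{e}_i)=\mathbf{e}_{\sigma(i)}$. With $\mathbf{u}\sqsubseteq\mathbf{v}$ iff $u_iv_i\ge0$ and $|u_i|\le|v_i|$ for all $i$, the Graver basis of $L$ is the set of $\sqsubseteq$-minimal elements of $L\setminus\{\mathbf{0}\}$; $\mathcal{G}$ is an equivariant Graver basis if $\mathrm{Sym}(\mathcal{G})=\{\sigma(\mathbf{g})\mid\sigma\in\mathrm{Sym},\mathbf{g}\in\mathcal{G}\}$ is the Graver basis. A Hilbert basis of a monoid is a minimal generating set (w.r.t.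 $\mathbb{Z}_{\ge0}$-combinations); $\mathcal{H}$ is an equivariant Hilbert basis of a $\mathrm{Sym}$-invariant monoid $M$ if $\mathrm{Sym}(\mathcal{H})$ is a Hilbert basis of $M$. $\pm A=A\cup(-A)$. *)

From mathcomp Require Import all_boot all_order all_algebra.
From Stdlib Require List.
Set Implicit Arguments. Unset Strict Implicit. Unset Printing Implicit Defensive.
Import Order.TTheory GRing.Theory Num.Theory.
Local Open Scope ring_scope.

(* Vectors of Z^(N).  Coordinates are indexed by nat, with index k standing
   for the paper's index k+1 (so e_1 is index 0, e_2 is index 1). *)
Definition vec := nat -> int.

Definition fin_supp (u : vec) : Prop := exists n, forall i, (n <= i)%N -> u i = 0.

Definition vzero : vec := fun _ => 0.
Definition vopp (u : vec) : vec := fun i => - u i.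
Definition vsub (u v : vec) : vec := fun i => u i - v i.

Definition veq (u v : vec) : Prop := forall i, u i = v i.

Definition is_lattice (L : vec -> Prop) : Prop :=
  (forall u, L u -> fin_supp u) /\ L vzero /\ (forall u v, L u -> L v -> L (vsub u v)).

(* Sym: permutations of N fixing all but finitely many points
   (a finitary injective map nat -> nat is automatically a bijection). *)
Definition is_fperm (s : nat -> nat) : Prop :=
  injective s /\ exists n, forall i, (n <= i)%N -> s i = i.

(* w = sigma(u), where sigma(e_i) = e_{sigma i}, i.e. w_{sigma i} = u_i *)
Definition is_act (s : nat -> nat) (u w : vec) : Prop := forall i, w (s i) = u i.

Definition sym_invariant (L : vec -> Prop) : Prop :=
  forall s u w, is_fperm s -> L u -> is_act s u w -> L w.

Definition sym_orbit (A : vec -> Prop) (w : vec) : Prop :=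
  exists s u, is_fperm s /\ A u /\ is_act s u w.

Definition memv (u : vec) (G : seq vec) : Prop := exists v, List.In v G /\ veq v u.

Definition setof (G : seq vec) : vec -> Prop := fun u => memv u G.

Definition conf_le (u v : vec) : Prop :=
  forall i, 0 <= u i * v i /\ `|u i| <= `|v i|.

Definition graver (L : vec -> Prop) (w : vec) : Prop :=
  L w /\ ~ veq w vzero /\
  forall v, L v -> ~ veq v vzero -> conf_le v w -> veq v w.

Definition equivariant_graver_basis (L : vec -> Prop) (G : seq vec) : Prop :=
  forall w, sym_orbit (setof G) w <-> graver L w.

Definition nn_comb (S : vec -> Prop) (v : vec) : Prop :=
  exists l : seq (nat * vec),
    (forall p, List.In p l -> S p.2) /\
    forall i, v i = \sum_(p <- l) (p.1)%:Z * p.2 i.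

Definition generates (S M : vec -> Prop) : Prop :=
  (forall v, S v -> M v) /\ (forall v, M v -> nn_comb S v).

Definition hilbert_basis (S M : vec -> Prop) : Prop :=
  generates S M /\
  forall S', (forall v, S' v -> S v) -> generates S' M -> forall v, S v -> S' v.

Definition equivariant_hilbert_basis (H : seq vec) (M : vec -> Prop) : Prop :=
  hilbert_basis (sym_orbit (setof H)) M.

Definition nonneg_part (L : vec -> Prop) : vec -> Prop :=
  fun u => L u /\ forall i, 0 <= u i.

Definition is_gcd_entries (L : vec -> Prop) (g : int) : Prop :=
  0 <= g /\ (forall u i, L u -> (g %| u i)%Z) /\
  (forall d : int, (forall u i, L u -> (d %| u i)%Z) -> (d %| g)%Z).

Definition gvec (g : int) : vec :=
  fun i => if i == 0%N then g else if i == 1%N then - g else 0.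

(* A Graver element with all entries of one sign is, up to sign, a minimal
   nonzero element of M = L ∩ Z_{>=0}^(N), and the Hilbert basis of M consists
   exactly of these minimal elements.  A Graver element w with w_i > 0 > w_j
   dominates g_L (e_i - e_j) conformally; this vector lies in L because, by
   Sym-invariance, c (e_1 - e_2) ∈ L for every entry c of an element of L, and
   these c form the subgroup g_L Z.  So w = g_L (e_i - e_j), and such vectors
   are Graver exactly when g_L > 0 and no g_L e_a lies in L. *)

From mathcomp Require Import all_boot all_order all_algebra.
From mathcomp Require Import zify.
From Stdlib Require List.
From Stdlib Require Import FunctionalExtensionality Classical.
Import Order.TTheory GRing.Theory Num.Theory.
Local Open Scope ring_scope.
Set Implicit Arguments. Unset Strict Implicit.

Definition transp (x y k : nat) : nat :=
  if k == x then y else if k == y then x else k.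

Lemma transpK x y : involutive (transp x y).
Proof.
move=> k; rewrite /transp; case: (eqVneq k x) => [->|hkx].
  by rewrite eqxx; case: (eqVneq y x) => [->|_]; rewrite ?eqxx.
case: (eqVneq k y) => [->|hky]; first by rewrite eqxx.
by rewrite (negbTE hkx) (negbTE hky).
Qed.

Lemma transp_inj x y : injective (transp x y).
Proof. exact: inv_inj (transpK x y). Qed.

Lemma transpL x y : transp x y x = y.
Proof. by rewrite /transp eqxx. Qed.

Lemma transp_id x y z : z != x -> z != y -> transp x y z = z.
Proof. by move=> zx zy; rewrite /transp (negbTE zx) (negbTE zy). Qed.

Lemma fperm_transp x y : is_fperm (transp x y).
Proof.
split; first exact: transp_inj.
by exists (maxn x y).+1 => i hi; apply: transp_id; apply/eqP; lia.
Qed.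

Lemma fperm_comp f g : is_fperm f -> is_fperm g -> is_fperm (f \o g).
Proof.
move=> [inj_f [n hn]] [inj_g [m hm]]; split; first exact: inj_comp.
by exists (maxn n m) => i hi /=; rewrite hm ?hn //; lia.
Qed.

Lemma fperm_pair i j a b : i != j -> a != b ->
  exists s, [/\ is_fperm s, s i = a & s j = b].
Proof.
move=> ij ab; set j' := transp i a j.
have aj' : a != j' by rewrite -(transpL i a) (inj_eq (@transp_inj i a)).
exists (transp j' b \o transp i a); split.
- exact: fperm_comp (fperm_transp _ _) (fperm_transp _ _).
- by rewrite /= transpL transp_id.
- by rewrite /= -/j' transpL.
Qed.

Lemma fperm_surj s : is_fperm s -> forall m, exists k, s k = m.
Proof.
move=> [inj_s [n hn]] m; case: (leqP n m) => [nm|mn]; first by exists m; apply: hn.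
have s_lt : forall i, (i < n)%N -> (s i < n)%N.
  move=> i hi; rewrite ltnNge; apply/negP => hsi; have /inj_s := hn _ hsi; lia.
have uniq_img : uniq (map s (iota 0 n)) by rewrite map_inj_uniq ?iota_uniq.
have sub_img : {subset map s (iota 0 n) <= iota 0 n}.
  by move=> x /mapP [i]; rewrite !mem_iota add0n => hi ->; rewrite s_lt //; lia.
have [_ img_eq] := uniq_min_size uniq_img sub_img (eq_leq (esym (size_map _ _))).
have : m \in map s (iota 0 n) by rewrite img_eq mem_iota; lia.
by case/mapP => k _ ->; exists k.
Qed.

Lemma vext (u v : vec) : veq u v -> u = v.
Proof. exact: functional_extensionality. Qed.

Lemma voppK : involutive vopp.
Proof. by move=> u; apply: vext => i; rewrite /vopp opprK. Qed.

Lemma vneq0_entry u : ~ veq u vzero -> exists i, u i <> 0.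
Proof.
move=> u_neq0; apply: NNPP => no_i; apply: u_neq0 => i.
by apply: NNPP => ?; apply: no_i; exists i.
Qed.

Definition ediff (c : int) (i j : nat) : vec :=
  fun k => if k == i then c else if k == j then - c else 0.

Definition eunit (c : int) (a : nat) : vec := fun k => if k == a then c else 0.

Lemma ediff0 i j : ediff 0 i j = vzero.
Proof. by apply: vext => k; rewrite /ediff oppr0; case: (k == i); case: (k == j). Qed.

Lemma ediffB c d i j : ediff (c - d) i j = vsub (ediff c i j) (ediff d i j).
Proof.
apply: vext => k; rewrite /ediff /vsub.
by case: ifP => // _; case: ifP => _; rewrite ?opprD ?subr0.
Qed.

Lemma is_act_ediff s c i j : injective s -> is_act s (ediff c i j) (ediff c (s i) (s j)).
Proof. by move=> inj_s k; rewrite /ediff !(inj_eq inj_s). Qed.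

Lemma is_act_eunit s c a : injective s -> is_act s (eunit c a) (eunit c (s a)).
Proof. by move=> inj_s k; rewrite /eunit (inj_eq inj_s). Qed.

Lemma sym_orbit_cat A B w :
  sym_orbit (setof (A ++ B)) w <-> sym_orbit (setof A) w \/ sym_orbit (setof B) w.
Proof.
split.
  move=> [s [u [fs [[v [ABv vu]] act]]]].
  by case/List.in_app_iff: ABv => [Av|Bv]; [left|right];
    exists s, u; do 2!split=> //; exists v.
have In_cat v : List.In v A \/ List.In v B -> List.In v (A ++ B) by move/List.in_app_iff.
by case=> [[s [u [fs [[v [Cv vu]] act]]]]|[s [u [fs [[v [Cv vu]] act]]]]];
  exists s, u; do 2!split=> //; exists v; split=> //; apply: In_cat; [left|right].
Qed.

Lemma sym_orbit_map_opp A w :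
  sym_orbit (setof (map vopp A)) w <-> sym_orbit (setof A) (vopp w).
Proof.
split=> [[s [u [fs [[_ [/List.in_map_iff [v [<- Av]] vu]] act]]]]|].
  exists s, v; do 2!split=> //; first by exists v.
  by move=> i; rewrite /vopp act -vu opprK.
move=> [s [u [fs [[v [Av vu]] act]]]]; exists s, (vopp u); do 2!split=> //.
  by exists (vopp v); split; [apply: List.in_map | move=> i; rewrite /vopp vu].
by move=> i; rewrite /vopp -act opprK.
Qed.

Lemma sym_orbit_nil w : ~ sym_orbit (setof [::]) w.
Proof. by case=> [s [u [_ [[v []]]]]]. Qed.

(* [gvec c] and [ediff c 0 1] are convertible. *)
Lemma sym_orbit_gvec c w :
  sym_orbit (setof [:: gvec c]) w <-> exists i j, i != j /\ w = ediff c i j.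
Proof.
split=> [[s [u [fs [[_ [[<-|[]] /vext <-] act]]]]]|[i [j [ij ->]]]].
  exists (s 0%N), (s 1%N); split; first by rewrite (inj_eq fs.1).
  apply: vext => m; have [k <-] := fperm_surj fs m.
  by rewrite act (is_act_ediff c 0 1 fs.1 k).
have [s [fs <- <-]] := fperm_pair (isT : 0%N != 1%N) ij.
exists s, (gvec c); do 2!split=> //; last exact: is_act_ediff fs.1.
by exists (gvec c); split; first left.
Qed.

Lemma ex_minimal (Q : nat -> Prop) :
  (exists n, Q n) -> exists n, Q n /\ forall m, (m < n)%N -> ~ Q m.
Proof.
move=> [n Qn]; apply: NNPP => no_min.
elim/ltn_ind: n Qn => n IH Qn; apply: no_min.
by exists n; split=> // m lt_mn; apply: IH.
Qed.

Lemma int_subgroup_principal (I : int -> Prop) :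
  I 0 -> (forall a b, I a -> I b -> I (a - b)) ->
  exists d, forall a, I a <-> (d %| a)%Z.
Proof.
move=> I0 IB.
have IN a : I a -> I (- a) by move/(IB 0); rewrite sub0r; apply.
have IM q a : I a -> I (q * a).
  move=> Ia; suff In (n : nat) : I (n%:Z * a).
    by case: q => n; rewrite ?NegzE ?mulNr; [apply: In | apply/IN/In].
  elim: n => [|n IHn]; first by rewrite mul0r.
  by rewrite intS mulrDl mul1r addrC; have := IB _ _ IHn (IN _ Ia); rewrite opprK.
case: (classic (exists n : nat, (0 < n)%N /\ I n%:Z)) => [pos|no_pos].
  have [d [[d_gt0 Id] d_min]] := ex_minimal pos.
  exists d%:Z => a; split=> [Ia|/dvdzP [q ->]]; last exact: IM.
  have r_ge0 : 0 <= (a %% d%:Z)%Z by apply: modz_ge0; lia.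
  have r_lt : (a %% d%:Z)%Z < d%:Z by apply: ltz_pmod; lia.
  have Ir : I (a %% d%:Z)%Z.
    have -> : (a %% d%:Z)%Z = a - (a %/ d%:Z)%Z * d%:Z.
      by rewrite {2}(divz_eq a d%:Z) addrC addKr.
    exact: IB Ia (IM _ _ Id).
  apply/dvdz_mod0P; apply: NNPP => r_neq0.
  apply: (d_min (absz (a %% d%:Z)%Z)); first lia.
  by split; [lia | rewrite gez0_abs].
exists 0 => a; rewrite dvd0z; split=> [Ia|/eqP ->] //.
apply/eqP; apply: NNPP => a_neq0; apply: no_pos; exists (absz a); split; first lia.
by case: (ger0P a) => [a_ge0|a_lt0]; [rewrite gez0_abs | rewrite ltz0_abs //; apply: IN].
Qed.

Section SymLattice.

Variable L : vec -> Prop.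
Hypotheses (latL : is_lattice L) (symL : sym_invariant L).

Lemma lattice_opp u : L u -> L (vopp u).
Proof.
have [_ [L0 LB]] := latL; move=> Lu.
suff -> : vopp u = vsub vzero u by apply: LB.
by apply: vext => i; rewrite /vsub /vzero sub0r.
Qed.

Lemma lattice_ediff_relabel c i j a b : i != j -> a != b ->
  L (ediff c i j) -> L (ediff c a b).
Proof.
move=> ij ab Lc; have [s [fs <- <-]] := fperm_pair ij ab.
exact: symL fs Lc (is_act_ediff c i j fs.1).
Qed.

Lemma lattice_eunit_relabel c a b : L (eunit c a) -> L (eunit c b).
Proof.
move=> La; rewrite -(transpL a b).
exact: symL (fperm_transp a b) La (is_act_eunit c a (@transp_inj a b)).
Qed.

(* Swapping [i] with an index [j] outside the support of [u] and subtracting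
   leaves [u i (e_i - e_j)]. *)
Lemma lattice_ediff_entry u i a b : a != b -> L u -> L (ediff (u i) a b).
Proof.
move=> ab Lu; have [n un0] := latL.1 u Lu.
set j := maxn n i.+1.
have uj0 : u j = 0 by apply: un0; lia.
have ij : i != j by apply/eqP; lia.
have Lswap : L (u \o transp i j).
  by apply: symL (fperm_transp i j) Lu _ => k /=; rewrite transpK.
have := latL.2.2 _ _ Lu Lswap.
have -> : vsub u (u \o transp i j) = ediff (u i) i j.
  apply: vext => k; rewrite /vsub /ediff /= /transp.
  case: (eqVneq k i) => [->|ki]; first by rewrite uj0 subr0.
  case: (eqVneq k j) => [->|kj]; first by rewrite uj0 sub0r.
  by rewrite subrr.
exact: lattice_ediff_relabel.
Qed.

Lemma lattice_ediff_gcd g a b : is_gcd_entries L g -> a != b -> L (ediff g a b).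
Proof.
move=> [_ [_ g_max]] ab; apply: (lattice_ediff_relabel (isT : 0%N != 1%N) ab).
have L0 : L (ediff 0 0 1) by rewrite ediff0; exact: latL.2.1.
have LB c e : L (ediff c 0 1) -> L (ediff e 0 1) -> L (ediff (c - e) 0 1).
  by rewrite ediffB; exact: latL.2.2.
have [d Id] := int_subgroup_principal L0 LB.
by apply/Id/g_max => u i Lu; apply/Id; exact: lattice_ediff_entry.
Qed.

End SymLattice.

Lemma sum_In_eq0 (T : Type) (l : seq T) (F : T -> int) :
  (forall q, List.In q l -> F q = 0) -> \sum_(q <- l) F q = 0.
Proof.
elim: l => [|a l IHl] F0; first by rewrite big_nil.
rewrite big_cons F0 /=; last by left.
by rewrite IHl ?add0r // => q lq; apply: F0; right.
Qed.

Lemma sum_In_ge0 (T : Type) (l : seq T) (F : T -> int) :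
  (forall q, List.In q l -> 0 <= F q) -> 0 <= \sum_(q <- l) F q.
Proof.
elim: l => [|a l IHl] F_ge0; first by rewrite big_nil.
rewrite big_cons addr_ge0 //; first by apply: F_ge0; left.
by apply: IHl => q lq; apply: F_ge0; right.
Qed.

Lemma ler_sum_In (T : Type) (l : seq T) (F : T -> int) p :
  (forall q, List.In q l -> 0 <= F q) -> List.In p l -> F p <= \sum_(q <- l) F q.
Proof.
elim: l => [|a l IHl] F_ge0 //= lp; rewrite big_cons.
have F_ge0' q : List.In q l -> 0 <= F q by move=> lq; apply: F_ge0; right.
case: lp => [<-|lp]; first by rewrite lerDl; exact: sum_In_ge0 F_ge0'.
by rewrite ler_wpDl ?IHl //; apply: F_ge0; left.
Qed.

Lemma sum_supp_gt0 (n : nat) (x : vec) : (forall i, 0 <= x i) -> ~ veq x vzero ->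
  (forall i, (n <= i)%N -> x i = 0) -> 0 < \sum_(i < n) x i.
Proof.
move=> x_ge0 x_neq0 x_supp; have [i xi] := vneq0_entry x_neq0.
have i_lt : (i < n)%N by rewrite ltnNge; apply/negP => /x_supp.
rewrite (bigD1 (Ordinal i_lt)) //= ltr_pwDl ?sumr_ge0 //; have := x_ge0 i; lia.
Qed.

Definition irreducible (M : vec -> Prop) (u : vec) : Prop :=
  M u /\ ~ veq u vzero /\
  forall v, M v -> ~ veq v vzero -> (forall i, v i <= u i) -> veq v u.

Lemma irreducibleN_split M u : M u -> ~ veq u vzero -> ~ irreducible M u ->
  exists v, [/\ M v, ~ veq v vzero, forall i, v i <= u i & ~ veq v u].
Proof.
move=> Mu u_neq0 u_red; apply: NNPP => no_v; apply: u_red; do 2!split=> //.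
by move=> v Mv v_neq0 v_le; apply: NNPP => ?; apply: no_v; exists v.
Qed.

Lemma nn_comb0 S : nn_comb S vzero.
Proof. by exists [::]; split=> // i; rewrite big_nil. Qed.

Lemma nn_comb1 S u : S u -> nn_comb S u.
Proof.
by move=> Su; exists [:: (1%N, u)]; split=> [p [<-|[]]|i] //; rewrite big_seq1 mul1r.
Qed.

Lemma nn_combD S u v : nn_comb S u -> nn_comb S v -> nn_comb S (fun i => u i + v i).
Proof.
move=> [lu [Slu u_sum]] [lv [Slv v_sum]]; exists (lu ++ lv); split=> [p|i].
  by case/List.in_app_iff; [apply: Slu | apply: Slv].
by rewrite big_cat u_sum v_sum.
Qed.

(* An irreducible [u] occurs in any nonnegative combination representing it. *)
Lemma generates_irreducible S M u : (forall v, M v -> forall i, 0 <= v i) ->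
  generates S M -> irreducible M u -> S u.
Proof.
move=> M_ge0 [SM S_gen] [Mu [u_neq0 u_min]].
have [l [Sl u_sum]] := S_gen u Mu.
have [i ui_neq0] := vneq0_entry u_neq0.
have [p [lp pi_neq0]] : exists p, List.In p l /\ (p.1)%:Z * p.2 i <> 0.
  apply: NNPP => no_p; apply: ui_neq0; rewrite u_sum; apply: sum_In_eq0 => q lq.
  by apply: NNPP => ?; apply: no_p; exists q.
have Mp := SM _ (Sl _ lp).
have p_le k : p.2 k <= u k.
  rewrite u_sum; apply: le_trans (ler_sum_In (F := fun q => (q.1)%:Z * q.2 k) _ lp).
    have p1_gt0 : (0 < p.1)%N.
      by rewrite lt0n; apply/eqP => p10; apply: pi_neq0; rewrite p10; lia.
    by rewrite /= ler_peMl ?M_ge0 // lez_nat.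
  by move=> q lq; apply: mulr_ge0 => //; apply: M_ge0 (SM _ (Sl _ lq)) k.
have p_neq0 : ~ veq p.2 vzero by move=> p0; apply: pi_neq0; rewrite p0 mulr0.
by rewrite -(vext (u_min _ Mp p_neq0 p_le)); apply: Sl.
Qed.

Section NonnegPart.

Variable L : vec -> Prop.
Hypothesis latL : is_lattice L.

Let M := nonneg_part L.

Lemma nn_comb_irreducible u : M u -> nn_comb (irreducible M) u.
Proof.
move=> Mu; have [n u_supp] := latL.1 u Mu.1.
have [N u_sum] : exists N, (absz (\sum_(i < n) u i)%R < N)%N.
  by exists (absz (\sum_(i < n) u i)%R).+1.
elim: N u Mu u_supp u_sum => // N IHN u Mu u_supp u_sum.
case: (classic (veq u vzero)) => [/vext ->|u_neq0]; first exact: nn_comb0.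
case: (classic (irreducible M u)) => [|u_red]; first exact: nn_comb1.
have [v [Mv v_neq0 v_le v_neq_u]] := irreducibleN_split Mu u_neq0 u_red.
set w := vsub u v.
have Mw : M w by split=> [|i]; [exact: latL.2.2 Mu.1 Mv.1 | rewrite subr_ge0].
have w_neq0 : ~ veq w vzero.
  by move=> w0; apply: v_neq_u => i; have := w0 i; rewrite /w /vsub /vzero; lia.
have v_supp i : (n <= i)%N -> v i = 0.
  by move=> ni; have := v_le i; have := Mv.2 i; rewrite u_supp //; lia.
have w_supp i : (n <= i)%N -> w i = 0 by move=> ni; rewrite /w /vsub u_supp ?v_supp.
have sum_split : \sum_(i < n) u i = \sum_(i < n) v i + \sum_(i < n) w i.
  by rewrite -big_split; apply: eq_bigr => i _; rewrite /w /vsub /=; lia.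
have v_sum := sum_supp_gt0 Mv.2 v_neq0 v_supp.
have w_sum := sum_supp_gt0 Mw.2 w_neq0 w_supp.
have -> : u = fun i => v i + w i by apply: vext => i; rewrite /w /vsub; lia.
by apply: nn_combD; [apply: IHN Mv v_supp _ | apply: IHN Mw w_supp _]; lia.
Qed.

Lemma hilbert_basis_irreducibleE S : hilbert_basis S M -> forall u, S u <-> irreducible M u.
Proof.
have M_ge0 v : M v -> forall i, 0 <= v i by case.
move=> [S_gen S_min] u; split; last exact: generates_irreducible M_ge0 S_gen.
pose S' v := S v /\ irreducible M v.
suff /(S_min S' (fun v (S'v : S' v) => S'v.1)) S'_S : generates S' M by move=> /S'_S [].
split=> [v [Sv _]|v Mv]; first exact: S_gen.1.
have [l [Sl v_sum]] := nn_comb_irreducible Mv.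
exists l; split=> // p lp; split; last exact: Sl.
exact: generates_irreducible M_ge0 S_gen (Sl _ lp).
Qed.

End NonnegPart.

Lemma dvdz_conf_ge (g x : int) : 0 < g -> (g %| x)%Z -> 0 < x -> 0 <= g * x /\ `|g| <= `|x|.
Proof.
move=> g_gt0 /dvdzP [c ->] cg_gt0; have c_ge1 : 1 <= c by nia.
by split; nia.
Qed.

Lemma dvdz_conf_le (g x : int) : 0 < g -> (g %| x)%Z ->
  0 <= x * g -> `|x| <= `|g| -> x = 0 \/ x = g.
Proof.
move=> g_gt0 /dvdzP [c ->] cgg_ge0 cg_le; have c01 : 0 <= c <= 1 by nia.
have [->|->] : c = 0 \/ c = 1 by lia.
- by left; rewrite mul0r.
- by right; rewrite mul1r.
Qed.

Section Graver.

Variable L : vec -> Prop.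
Hypotheses (latL : is_lattice L) (symL : sym_invariant L).

Lemma graver_opp w : graver L (vopp w) <-> graver L w.
Proof.
suff graverN u : graver L u -> graver L (vopp u) by split=> /graverN; rewrite ?voppK.
move=> [Lu [u_neq0 u_min]]; split; first exact: lattice_opp.
split=> [u0|v Lv v_neq0 v_le i].
  by apply: u_neq0 => i; have := u0 i; rewrite /vopp /vzero; lia.
have Nv_neq0 : ~ veq (vopp v) vzero.
  by move=> v0; apply: v_neq0 => k; have := v0 k; rewrite /vopp /vzero; lia.
have Nv_le : conf_le (vopp v) u by move=> k; have := v_le k; rewrite /vopp !normrN mulNr mulrN.
by have := u_min _ (lattice_opp latL Lv) Nv_neq0 Nv_le i; rewrite /vopp; lia.
Qed.

Lemma graver_nonneg w : (forall i, 0 <= w i) ->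
  graver L w <-> irreducible (nonneg_part L) w.
Proof.
move=> w_ge0; split=> [[Lw [w_neq0 w_min]]|[[Lw _] [w_neq0 w_min]]].
  do 2!split=> //; move=> v [Lv v_ge0] v_neq0 v_le; apply: w_min => // i.
  by rewrite mulr_ge0 // !ger0_norm.
do 2!split=> //; move=> v Lv v_neq0 v_conf.
have v_ge0 i : 0 <= v i by have [] := v_conf i; have := w_ge0 i; nia.
by apply: w_min => // i; have [] := v_conf i; rewrite !ger0_norm.
Qed.

Variables (g : int) (gcd_g : is_gcd_entries L g).

(* [g (e_i - e_j)] lies in [L] and is conformally below [w]. *)
Lemma graver_mixed_sign w i j : graver L w -> 0 < w i -> w j < 0 -> w = ediff g i j.
Proof.
move=> [Lw [_ w_min]] wi_gt0 wj_lt0.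
have [g_ge0 [g_dvd _]] := gcd_g.
have ij : i != j by apply/eqP => ij; move: wj_lt0; rewrite -ij; lia.
have g_gt0 : 0 < g.
  rewrite lt_def g_ge0 andbT; apply/eqP => g0.
  by have /dvdzP [c wi] := g_dvd _ i Lw; move: wi_gt0; rewrite wi g0 mulr0.
have Lg := lattice_ediff_gcd latL symL gcd_g ij.
have g_neq0 : ~ veq (ediff g i j) vzero by move=> /(_ i); rewrite /ediff eqxx /vzero; lia.
apply/esym/vext/w_min => // k; rewrite /ediff.
case: (eqVneq k i) => [->|ki]; first exact: dvdz_conf_ge g_gt0 (g_dvd _ _ Lw) wi_gt0.
case: (eqVneq k j) => [->|kj]; last by rewrite mul0r normr0.
have gNwj : (g %| - w j)%Z by rewrite dvdzE abszN -dvdzE g_dvd.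
have Nwj_gt0 : 0 < - w j by rewrite oppr_gt0.
have [conf_sign conf_abs] := dvdz_conf_ge g_gt0 gNwj Nwj_gt0.
by rewrite mulNr -mulrN normrN -(normrN (w j)).
Qed.

Lemma graver_ediff i j : i != j -> 0 < g -> (forall a, ~ L (eunit g a)) ->
  graver L (ediff g i j).
Proof.
move=> ij g_gt0 no_unit; have ji : j != i by rewrite eq_sym.
have [_ [g_dvd _]] := gcd_g.
split; first exact: lattice_ediff_gcd.
split=> [/(_ i)|v Lv v_neq0 v_conf]; first by rewrite /ediff eqxx /vzero; lia.
have v0 k : k != i -> k != j -> v k = 0.
  move=> ki kj; have [_] := v_conf k.
  by rewrite /ediff (negbTE ki) (negbTE kj) normr0; lia.
have vi : v i = 0 \/ v i = g.
  have [vi_sign vi_abs] := v_conf i; rewrite /ediff eqxx in vi_sign vi_abs.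
  exact: dvdz_conf_le g_gt0 (g_dvd _ _ Lv) vi_sign vi_abs.
have vj : v j = 0 \/ v j = - g.
  have [vj_sign vj_abs] := v_conf j; rewrite /ediff eqxx (negbTE ji) in vj_sign vj_abs.
  have gNvj : (g %| - v j)%Z by rewrite dvdzE abszN -dvdzE g_dvd.
  have Nvj_sign : 0 <= - v j * g by rewrite mulNr -mulrN.
  have Nvj_abs : `|- v j| <= `|g| by rewrite normrN -(normrN g).
  by case: (dvdz_conf_le g_gt0 gNvj Nvj_sign Nvj_abs) => ?; [left | right]; lia.
have v_eq : v = fun k => if k == i then v i else if k == j then v j else 0.
  apply: vext => k; case: eqVneq => [->|ki] //; case: eqVneq => [->|kj] //; exact: v0.
move: v_neq0 Lv; rewrite v_eq; case: vi vj => -> [] -> v_neq0 Lv.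
- by case: v_neq0 => k; rewrite /vzero; case: (k == i); case: (k == j).
- case: (no_unit j).
  suff -> : eunit g j = vopp (fun k => if k == i then 0 else if k == j then - g else 0).
    exact: lattice_opp.
  apply: vext => k; rewrite /eunit /vopp; case: (eqVneq k j) => [->|kj].
    by rewrite (negbTE ji) opprK.
  by case: (k == i); rewrite oppr0.
- case: (no_unit i).
  suff -> : eunit g i = (fun k => if k == i then g else if k == j then 0 else 0) by [].
  by apply: vext => k; rewrite /eunit; case: (k == i); case: (k == j).
- by [].
Qed.

Lemma graver_ediffP i j : i != j ->
  graver L (ediff g i j) <-> 0 < g /\ forall a, ~ L (eunit g a).
Proof.
move=> ij; split=> [[_ [g_neq0 g_min]]|[]]; last exact: graver_ediff.
have g_gt0 : 0 < g.
  rewrite lt_def gcd_g.1 andbT; apply/eqP => g0; apply: g_neq0 => k.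
  by rewrite g0 ediff0.
split=> // a /(lattice_eunit_relabel symL i) Li.
have unit_neq0 : ~ veq (eunit g i) vzero by move=> /(_ i); rewrite /eunit eqxx /vzero; lia.
have unit_le : conf_le (eunit g i) (ediff g i j).
  move=> k; rewrite /eunit /ediff; case: (k == i); last by rewrite mul0r normr0.
  by split=> //; apply: mulr_ge0; apply: ltW.
have := g_min _ Li unit_neq0 unit_le j.
by rewrite /eunit /ediff eq_sym (negbTE ij) eqxx; lia.
Qed.

End Graver.

Section GraverClassification.

Variables (L : vec -> Prop) (H : seq vec) (g : int).
Hypotheses (latL : is_lattice L) (symL : sym_invariant L).
Hypotheses (hbH : equivariant_hilbert_basis H (nonneg_part L)) (gcd_g : is_gcd_entries L g).

Lemma graverE w : graver L w <->
  sym_orbit (setof H) w \/ sym_orbit (setof H) (vopp w) \/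
  graver L (gvec g) /\ exists i j, i != j /\ w = ediff g i j.
Proof.
have HBE := hilbert_basis_irreducibleE latL hbH.
split=> [gw|[/HBE irr_w | [/HBE irr_Nw | [g_graver [i [j [ij ->]]]]]]]; last 3 first.
- by apply/graver_nonneg => //; case: irr_w => [[_ w_ge0] _].
- by apply/graver_opp/graver_nonneg => //; case: irr_Nw => [[_ w_ge0] _].
- apply/(graver_ediffP latL symL gcd_g ij).
  exact/(graver_ediffP latL symL gcd_g (isT : 0%N != 1%N)).
case: (classic (forall i, 0 <= w i)) => [w_ge0|/not_all_ex_not [j /negP]].
  by left; apply/HBE/graver_nonneg.
rewrite -ltNge => wj_lt0.
case: (classic (forall i, w i <= 0)) => [w_le0|/not_all_ex_not [i /negP]].
  right; left; apply/HBE/graver_nonneg; last exact/graver_opp.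
  by move=> i; rewrite /vopp oppr_ge0.
rewrite -ltNge => wi_gt0; have ij : i != j by apply/eqP => ij; move: wi_gt0; rewrite ij; lia.
have w_eq := graver_mixed_sign latL symL gcd_g gw wi_gt0 wj_lt0.
right; right; split; last by exists i, j.
apply/(graver_ediffP latL symL gcd_g (isT : 0%N != 1%N)).
by apply/(graver_ediffP latL symL gcd_g ij); rewrite -w_eq.
Qed.

Lemma equivariant_graver_basis_cat X :
  (forall w, sym_orbit (setof X) w <-> graver L (gvec g) /\ sym_orbit (setof [:: gvec g]) w) ->
  equivariant_graver_basis L (H ++ map vopp H ++ X).
Proof.
by move=> X_orbit w; rewrite graverE !sym_orbit_cat sym_orbit_map_opp X_orbit sym_orbit_gvec.
Qed.

End GraverClassification.

Lemma memv_cat_opp (H X : seq vec) h : List.In h H ->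
  memv h (H ++ map vopp H ++ X) /\ memv (vopp h) (H ++ map vopp H ++ X).
Proof.
move=> Hh; split; [exists h | exists (vopp h)]; split=> //.
  by apply/List.in_app_iff; left.
apply/List.in_app_iff; right; apply/List.in_app_iff; left.
exact: List.in_map.
Qed.

Lemma In_cat_opp (H X : seq vec) v : List.In v (H ++ map vopp H ++ X) ->
  (exists h, List.In h H /\ (veq v h \/ veq v (vopp h))) \/ List.In v X.
Proof.
case/List.in_app_iff => [Hv|/List.in_app_iff [/List.in_map_iff [h [<- Hh]]|Xv]].
- by left; exists v; split=> //; left.
- by left; exists h; split=> //; right.
- by right.
Qed.

Unset Implicit Arguments.

Theorem theorem4p9 (L : vec -> Prop) (H : seq vec) (gL : int) :
  is_lattice L -> sym_invariant L ->
  equivariant_hilbert_basis H (nonneg_part L) ->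
  is_gcd_entries L gL ->
  exists G : seq vec,
    equivariant_graver_basis L G /\
    (forall h, List.In h H -> memv h G /\ memv (vopp h) G) /\
    (forall v, List.In v G ->
       (exists h, List.In h H /\ (veq v h \/ veq v (vopp h))) \/
       veq v (gvec gL) \/ veq v (vopp (gvec gL))).
Proof.
move=> latL symL hbH gcd_g.
have basis := equivariant_graver_basis_cat latL symL hbH gcd_g.
case: (classic (graver L (gvec gL))) => [gvec_graver|gvec_not_graver].
  exists (H ++ map vopp H ++ [:: gvec gL]); split; first by apply: basis => w; split=> [|[]].
  split=> [h|v /In_cat_opp [|[<-|[]]]]; [exact: memv_cat_opp | by left | by right; left].
exists (H ++ map vopp H ++ [::]); split.
  by apply: basis => w; split=> [/sym_orbit_nil|[/gvec_not_graver]].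
by split=> [h|v /In_cat_opp [|[]]]; [exact: memv_cat_opp | left].
Qed.
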